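(* Let $L=8$ and let $B=2^s\ge 8$. Let $\alpha_0,\dots,\alpha_{B-1}$ be nonzero real LLRs of one list path at a rate-1 constituent block, indexed so that $|\alpha_0|<|\alpha_1|<\cdots<|\alpha_{B-1}|$, and let $\beta=(\beta_0,\dots,\beta_{B-1})\in\{0,1\}^B$ with $\beta_j=\frac{1-\mathrm{sgn}(\alpha_j)}{2}$. For a candidate sub-path $\hat\beta\in\{0,1\}^B$ define its incremental path metric $\Delta(\hat\beta)=\sum_{j=0}^{B-1}|\hat\beta_j-\beta_j|\,|\alpha_j|$. Let $\mathcal C\subseteq\{0,1\}^B$ be the following set of 13 vectors: $\beta$; $\beta\oplus e_p$ for $p=0,1,\dots,6$; $\beta\oplus e_0\oplus e_1$; $\beta\oplus e_0\oplus e_2$; $\beta\oplus e_1\oplus e_2$; $\beta\oplus e_0\oplus e_3$; $\beta\oplus e_0\oplus e_1\oplus e_2$. Then the $L=8$ maximum-likelihood sub-paths of this path (the 8 vectors of $\{0,1\}^B$ with the smallest incremental path metrics $\Delta$) fall into $\mathcal C$; that is, there is a set $S\subseteq\mathcal C$ with $|S|=8$ such that $\Delta(v)\le\Delta(w)$ for all $v\in S$ and all $w\in\{0,1\}^B\setminus S$. Consequently, in one-time path extension of all 8 list paths followed by pruning to the 8 paths of smallest path metric, restricting each path's extensions to these 13 error patterns incurs no loss.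
   Context: Setting: successive-cancellation list (SCL) decoding of a polar code with list size $L$. At a constituent block of length $B$ (a rate-1 node, i.e., all $B$ positions carry information, so every vector in $\{0,1\}^B$ is a valid codeword of the block), each list path $l$ has a path metric $\mathrm{PM}^l$ and soft inputs $\alpha_j$. A sub-path extending path $l$ is a choice of block output $\hat\beta\in\{0,1\}^B$; its new path metric is $\mathrm{PM}^l+\Delta(\hat\beta)$. After extension, the $L$ extended paths (over all parent paths) with the smallest path metrics survive. $e_p\in\{0,1\}^B$ denotes the vector with a $1$ in position $p$ (positions indexed $0,\dots,B-1$ in the sorted order above) and $0$ elsewhere; $\oplus$ is componentwise XOR. *)

From mathcomp Require Import all_boot all_order all_algebra.
Set Implicit Arguments. Unset Strict Implicit. Unset Printing Implicit Defensive.
Import Order.TTheory GRing.Theory Num.Theory.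
Local Open Scope ring_scope.

Notation bvec B := {ffun 'I_B -> bool}.

(* Hard decision: beta_j = (1 - sgn alpha_j)/2, i.e. 1 iff alpha_j < 0. *)
Definition hard_dec (R : realFieldType) (B : nat) (alpha : 'I_B -> R) : bvec B :=
  [ffun j => alpha j < 0].

Definition Delta (R : realFieldType) (B : nat) (alpha : 'I_B -> R) (hb : bvec B) : R :=
  \sum_(j < B) `|(nat_of_bool (hb j))%:R - (nat_of_bool (hard_dec alpha j))%:R| * `|alpha j|.

Definition flip (B : nat) (v : bvec B) (p : nat) : bvec B :=
  [ffun j => xorb (v j) (nat_of_ord j == p)].

Definition cand_set (B : nat) (beta : bvec B) : {set bvec B} :=
  [set beta;
       flip beta 0; flip beta 1; flip beta 2; flip beta 3;
       flip beta 4; flip beta 5; flip beta 6;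
       flip (flip beta 0) 1; flip (flip beta 0) 2; flip (flip beta 1) 2;
       flip (flip beta 0) 3; flip (flip (flip beta 0) 1) 2].

From mathcomp Require Import all_boot all_order all_algebra.
From mathcomp Require Import lra zify.
Set Implicit Arguments. Unset Strict Implicit. Unset Printing Implicit Defensive.
Import Order.TTheory GRing.Theory Num.Theory.
Local Open Scope ring_scope.

(* Delta w is the sum of |alpha_j| over the positions j where w differs from
   beta, and |alpha_j| is nondecreasing in j (only this is used: neither the
   nonzeroness nor the strict ordering of the LLRs matters, and B >= 7 would
   do).  An error pattern outside the 13 candidates contains a position >= 7,
   or two positions one of which is >= 4, or position 3 together with 1 or 2;
   its metric is then at least |alpha_6|, |alpha_0| + |alpha_4| or
   |alpha_1| + |alpha_3|, which bounds the metrics of 8 distinct candidates.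
   Hence the 8 best candidates cannot be beaten from outside the candidate
   set: such a vector would lie below one of them, yet above 8 candidates. *)

Section KSmallest.
Variables (disp : Order.disp_t) (R : orderType disp) (T : finType) (f : T -> R).
Local Open Scope order_scope.

Lemma exists_ksubset_min (C : {set T}) k : (k <= #|C|)%N ->
  exists S : {set T}, [/\ S \subset C, #|S| = k &
    forall v w, v \in S -> w \in C :\: S -> f v <= f w].
Proof.
elim: k => [|k IH] kC.
  by exists set0; rewrite sub0set cards0; split=> // v w; rewrite inE.
have [S [SC cardS Smin]] := IH (ltnW kC).
have /properP [_ [x0 x0C x0S]] : S \proper C by rewrite properEcard SC cardS.
have x0CS : x0 \in C :\: S by rewrite inE x0S.
case: (arg_minP f x0CS) => x /setDP [xC xS] xmin.
exists (x |: S); split.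
- by rewrite subUset sub1set xC.
- by rewrite cardsU1 xS cardS.
- move=> v w; rewrite !inE negb_or => /predU1P [-> | vS] /andP [/andP [_ wS] wC].
    by apply: xmin; apply/setDP.
  by apply: Smin => //; apply/setDP.
Qed.

Lemma exists_ksubset_min_dominating (C : {set T}) k : (k <= #|C|)%N ->
  (forall w, w \notin C -> (k <= #|[set c in C | (f c <= f w)%O]|)%N) ->
  exists S : {set T}, [/\ S \subset C, #|S| = k &
    forall v w, v \in S -> w \notin S -> f v <= f w].
Proof.
move=> kC dom; have [S [SC cardS Smin]] := exists_ksubset_min kC.
exists S; split=> // v w vS wS.
have [wC | wNC] := boolP (w \in C); first by apply: Smin => //; apply/setDP.
rewrite leNgt; apply/negP => fwv.
have : [set c in C | f c <= f w] \subset S :\ v.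
  apply/subsetP => c; rewrite !inE => /andP [cC fcw].
  have fcv := le_lt_trans fcw fwv.
  apply/andP; split; first by apply: contraTneq fcv => ->; rewrite ltxx.
  by apply: contraLR fcv => cS; rewrite -leNgt; apply: Smin => //; apply/setDP.
move/subset_leq_card; have := dom w wNC; have := cardsD1 v S.
by rewrite vS cardS; lia.
Qed.

End KSmallest.

Definition flips (B : nat) (v : bvec B) (E : seq nat) : bvec B := foldl (@flip B) v E.

Lemma flipsE B (v : bvec B) E : uniq E ->
  flips v E = [ffun j => v j (+) (nat_of_ord j \in E)].
Proof.
elim: E v => [|p E IH] v /=.
  by move=> _; apply/ffunP => j; rewrite ffunE addbF.
case/andP => pE uE; rewrite IH //; apply/ffunP => j; rewrite !ffunE inE.
by case: (v j); case: eqP => [-> | _]; rewrite ?(negbTE pE) //;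
  case: (nat_of_ord j \in E).
Qed.

Lemma flips_inj B (v : bvec B) :
  {in [pred E | sorted ltn E & all (fun n => n < B)%N E] &, injective (flips v)}.
Proof.
move=> E1 E2 /andP [sE1 E1B] /andP [sE2 E2B] eqE.
apply: (irr_sorted_eq ltn_trans ltnn) => // n.
have [nB | Bn] := ltnP n B; last first.
  by apply/idP/idP => [/(allP E1B) | /(allP E2B)]; rewrite ltnNge Bn.
have /ffunP /(_ (Ordinal nB)) := eqE.
rewrite !flipsE ?(sorted_uniq ltn_trans ltnn) // !ffunE; exact: addbI.
Qed.

Lemma flips_of_flipped B (beta v : bvec B) E : uniq E ->
  (forall j, (v j != beta j) = (nat_of_ord j \in E)) -> v = flips beta E.
Proof.
move=> uE vE; rewrite flipsE //; apply/ffunP => j; rewrite ffunE -vE.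
by case: (v j); case: (beta j).
Qed.

Lemma Delta_flipped (R : realFieldType) B (alpha : 'I_B -> R) (v : bvec B) :
  Delta alpha v = \sum_(j | v j != hard_dec alpha j) `|alpha j|.
Proof.
rewrite /Delta [RHS]big_mkcond; apply: eq_bigr => j _.
case: (v j); case: (hard_dec alpha j);
  by rewrite /= ?subrr ?subr0 ?sub0r ?normrN ?normr0 ?normr1 ?mul0r ?mul1r.
Qed.

Definition cand_patterns : seq (seq nat) :=
  [:: [::]; [:: 0]; [:: 1]; [:: 2]; [:: 3]; [:: 4]; [:: 5]; [:: 6];
      [:: 0; 1]; [:: 0; 2]; [:: 1; 2]; [:: 0; 3]; [:: 0; 1; 2]]%N.

Lemma cand_setE B (beta : bvec B) :
  cand_set beta = [set v in map (flips beta) cand_patterns].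
Proof. by apply/setP => v; rewrite !inE -!orbA. Qed.

Lemma cand_patterns_small :
  all (fun E => sorted ltn E && all (fun n => n < 7)%N E) cand_patterns.
Proof. by []. Qed.

Lemma singleton_cand n : (n < 7)%N -> [:: n] \in cand_patterns.
Proof. by case: n => [|[|[|[|[|[|[|]]]]]]]. Qed.

Lemma low_pattern_cand (d : nat -> bool) : ~~ (d 3 && (d 1 || d 2))%N ->
  [seq n <- iota 0 4 | d n] \in cand_patterns.
Proof. by rewrite /=; case: (d 0%N); case: (d 1%N); case: (d 2%N); case: (d 3%N). Qed.

Section EightBest.
Variables (R : realFieldType) (b : nat) (alpha : 'I_b.+1 -> R).
Hypothesis alpha_mono : forall i j : 'I_b.+1, (i <= j)%N -> `|alpha i| <= `|alpha j|.
Hypothesis b_ge6 : (6 <= b)%N.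

Local Notation beta := (hard_dec alpha).
Local Notation a n := `|alpha (inord n)|.

Lemma a_le_norm n (j : 'I_b.+1) : (n <= j)%N -> a n <= `|alpha j|.
Proof. by move=> nj; apply: alpha_mono; rewrite inordK // (leq_ltn_trans nj). Qed.

Lemma a_chain : [/\ 0 <= a 0, a 0 <= a 1, a 1 <= a 2 &
  [/\ a 2 <= a 3, a 3 <= a 4, a 4 <= a 5 & a 5 <= a 6]].
Proof.
have a_le m n : (m <= n <= 6)%N -> a m <= a n.
  by case/andP => mn n6; apply: a_le_norm; rewrite inordK // ltnS (leq_trans n6).
by rewrite normr_ge0 !a_le.
Qed.

Lemma sum_pattern E : uniq E -> all (fun n => n <= b)%N E ->
  \sum_(n <- E) a n = \sum_(j < b.+1 | nat_of_ord j \in E) `|alpha j|.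
Proof.
move=> uE Eb; under [RHS]eq_bigr => j _ do rewrite -[j in alpha j]inord_val.
rewrite -(big_mkord (fun n => n \in E) (fun n => a n)) -big_filter.
apply/perm_big/uniq_perm; rewrite ?filter_uniq ?iota_uniq // => n.
rewrite mem_filter mem_iota add0n ltnS /=.
by case nE: (n \in E); rewrite //= (allP Eb _ nE).
Qed.

Lemma Delta_flips E : uniq E -> all (fun n => n <= b)%N E ->
  Delta alpha (flips beta E) = \sum_(n <- E) a n.
Proof.
move=> uE Eb; rewrite sum_pattern // Delta_flipped flipsE //.
by apply: eq_bigl => j; rewrite ffunE; case: (beta j); case: (nat_of_ord j \in E).
Qed.

Lemma sum_le_Delta (w : bvec b.+1) (J : seq 'I_b.+1) : uniq J ->
  (forall j, j \in J -> w j != beta j) -> \sum_(j <- J) `|alpha j| <= Delta alpha w.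
Proof.
move=> uJ Jw; rewrite big_uniq // Delta_flipped [leRHS](bigID (mem J)) /=.
rewrite [X in X + _](eq_bigl (mem J)) => [|j]; first by rewrite lerDl sumr_ge0.
by apply/andP/idP => [[] | jJ] //; rewrite Jw.
Qed.

Lemma cand_pattern_valid E : E \in cand_patterns ->
  sorted ltn E && all (fun n => n <= b)%N E.
Proof.
move=> /(allP cand_patterns_small) /andP [-> E7] /=.
by apply/allP => n /(allP E7) n7; apply: leq_trans b_ge6.
Qed.

Lemma card_cand_set : #|cand_set beta| = 13%N.
Proof.
rewrite cand_setE cardsE (card_uniqP _) ?size_map // map_inj_in_uniq //.
by move=> E1 E2 /cand_pattern_valid E1v /cand_pattern_valid E2v; apply: flips_inj.
Qed.

Lemma card_cand_below (w : bvec b.+1) Es (J : seq 'I_b.+1) :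
  all (fun E => E \in cand_patterns) Es -> uniq Es ->
  uniq J -> (forall j, j \in J -> w j != beta j) ->
  all (fun E => \sum_(n <- E) a n <= \sum_(j <- J) `|alpha j|) Es ->
  (size Es <= #|[set c in cand_set beta | (Delta alpha c <= Delta alpha w)%R]|)%N.
Proof.
move=> EsC uEs uJ Jw EsJ.
have valid E : E \in Es -> sorted ltn E && all (fun n => n <= b)%N E.
  by move=> EEs; apply/cand_pattern_valid/(allP EsC).
rewrite -(size_map (flips beta)) -(card_uniqP _); last first.
  by rewrite map_inj_in_uniq // => E1 E2 /valid E1v /valid E2v; apply: flips_inj.
apply/subset_leq_card/subsetP => _ /mapP [E EEs ->].
have /andP [sE Eb] := valid E EEs.
rewrite inE cand_setE inE map_f ?(allP EsC) //=.
rewrite Delta_flips ?(sorted_uniq ltn_trans ltnn) //.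
exact: le_trans (allP EsJ E EEs) (sum_le_Delta uJ Jw).
Qed.

Lemma card_cand_below_far (w : bvec b.+1) (j : 'I_b.+1) :
  (6 < j)%N -> w j != beta j ->
  (8 <= #|[set c in cand_set beta | (Delta alpha c <= Delta alpha w)%R]|)%N.
Proof.
move=> j6 wj; have a6j := a_le_norm (ltnW j6); have [? ? ? [? ? ? ?]] := a_chain.
apply: (card_cand_below (J := [:: j])
  (Es := [:: [::]; [:: 0]; [:: 1]; [:: 2]; [:: 3]; [:: 4]; [:: 5]; [:: 6]]%N)) => //.
  by move=> k; rewrite inE => /eqP ->.
rewrite /= !big_cons !big_nil; repeat (apply/andP; split); lra.
Qed.

Lemma card_cand_below_big_pair (w : bvec b.+1) (j k : 'I_b.+1) :
  (3 < j)%N -> j != k -> w j != beta j -> w k != beta k ->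
  (8 <= #|[set c in cand_set beta | (Delta alpha c <= Delta alpha w)%R]|)%N.
Proof.
move=> j3 jk wj wk; have a4j := a_le_norm j3; have a0k := a_le_norm (leq0n k).
have [? ? ? [? ? ? ?]] := a_chain.
apply: (card_cand_below (J := [:: j; k]) (Es := [:: [::]; [:: 0]; [:: 1]; [:: 2];
  [:: 3]; [:: 0; 1]; [:: 0; 2]; [:: 0; 3]]%N)) => //.
- by rewrite /= inE jk.
- by move=> i; rewrite !inE => /orP [] /eqP ->.
rewrite /= !big_cons !big_nil; repeat (apply/andP; split); lra.
Qed.

Lemma card_cand_below_pair3 (w : bvec b.+1) (j k : 'I_b.+1) :
  (0 < j)%N -> (2 < k)%N -> j != k -> w j != beta j -> w k != beta k ->
  (8 <= #|[set c in cand_set beta | (Delta alpha c <= Delta alpha w)%R]|)%N.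
Proof.
move=> j0 k2 jk wj wk; have a1j := a_le_norm j0; have a3k := a_le_norm k2.
have [? ? ? [? ? ? ?]] := a_chain.
apply: (card_cand_below (J := [:: j; k]) (Es := [:: [::]; [:: 0]; [:: 1]; [:: 2];
  [:: 3]; [:: 0; 1]; [:: 0; 2]; [:: 1; 2]]%N)) => //.
- by rewrite /= inE jk.
- by move=> i; rewrite !inE => /orP [] /eqP ->.
rewrite /= !big_cons !big_nil; repeat (apply/andP; split); lra.
Qed.

Lemma card_cand_below_outside (w : bvec b.+1) : w \notin cand_set beta ->
  (8 <= #|[set c in cand_set beta | (Delta alpha c <= Delta alpha w)%R]|)%N.
Proof.
move=> wC.
have [/existsP [j /andP [wj j3]] | /existsPn low] :=
  boolP [exists j, (w j != beta j) && (3 < j)%N].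
  have [j6 | j_le6] := ltnP 6 j; first exact: card_cand_below_far j6 wj.
  have [/existsP [k /andP [kj wk]] | /existsPn single] :=
    boolP [exists k, (k != j) && (w k != beta k)].
    by apply: card_cand_below_big_pair j3 _ wj wk; rewrite eq_sym.
  case/negP: wC; rewrite (@flips_of_flipped _ beta w [:: nat_of_ord j]) //.
    by rewrite cand_setE inE map_f ?singleton_cand.
  move=> k; rewrite inE; apply/idP/eqP => [wk | /val_inj -> //].
  by apply/eqP; apply: contraNT (single k) => kj; rewrite wk andbT.
pose d n := w (inord n) != beta (inord n).
have in_range n : (n <= 3)%N -> (n < b.+1)%N.
  by move=> n3; rewrite ltnS (leq_trans n3) // (leq_trans _ b_ge6).
have [/andP [d3 d12] | d312] := boolP (d 3 && (d 1 || d 2))%N.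
  have [j [j0 j3 dj]] : exists j, [/\ 0 < j, j < 3 & d j]%N.
    by case/orP: d12; [exists 1%N | exists 2%N].
  have jb : (j < b.+1)%N by apply/in_range/ltnW.
  have b3 : (3 < b.+1)%N by apply: in_range.
  apply: (card_cand_below_pair3 (j := inord j) (k := inord 3)); rewrite ?inordK //.
  by apply/eqP => /(congr1 val) /=; rewrite !inordK //; lia.
case/negP: wC; rewrite (@flips_of_flipped _ beta w [seq n <- iota 0 4 | d n]).
- by rewrite cand_setE inE map_f ?low_pattern_cand.
- by rewrite filter_uniq ?iota_uniq.
move=> k; rewrite mem_filter mem_iota /d inord_val /=.
by case wk: (w k != beta k); rewrite //= ltnS leqNgt; have := low k; rewrite wk.
Qed.

Lemma exists_eight_best_cand : exists S : {set bvec b.+1},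
  [/\ S \subset cand_set beta, #|S| = 8%N &
      forall v w, v \in S -> w \notin S -> Delta alpha v <= Delta alpha w].
Proof.
apply: exists_ksubset_min_dominating; first by rewrite card_cand_set.
exact: card_cand_below_outside.
Qed.

End EightBest.

Theorem proposition1 (R : realFieldType) (s : nat) (hs : (3 <= s)%N)
    (alpha : 'I_(2 ^ s) -> R)
    (hnz : forall j, alpha j != 0)
    (hsort : forall i j : 'I_(2 ^ s), (i < j)%N -> `|alpha i| < `|alpha j|) :
  exists S : {set bvec (2 ^ s)},
    [/\ S \subset cand_set (hard_dec alpha), #|S| = 8%N &
        forall v w, v \in S -> w \notin S -> Delta alpha v <= Delta alpha w].
Proof.
have : (7 <= 2 ^ s)%N by rewrite (leq_trans _ (leq_pexp2l _ hs)).
move: alpha hsort {hnz}; case: (2 ^ s)%N => // b alpha hsort b_ge6.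
apply: exists_eight_best_cand => // i j.
by rewrite leq_eqVlt => /orP [/eqP/val_inj -> // | /hsort/ltW].
Qed.
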